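(* Let $F$ be a $3$-graph such that for every vertex $v\in V(F)$ there exists a vertex $u\in V(F)\setminus\{v\}$ with $N_F(v)\cap N_F(u)\neq\emptyset$. Then for every $p\in(0,1)$ and every $\mu>0$ there exist $n_0\in\mathbb{N}$ and $\alpha>0$ such that for every $n\ge n_0$ there exists an $(n,p,\mu,\cdot)$ $3$-graph $H$ with $\delta_1(H)\ge \alpha n^2$ that has no $F$-factor.
   Context: A $k$-graph $H=(V(H),E(H))$ has edge set $E(H)\subseteq\binom{V(H)}{k}$. For $S\subseteq V(H)$ with $1\le |S|\le k-1$, $N_H(S)=\{S'\in\binom{V(H)}{k-|S|}: S\cup S'\in E(H)\}$ and $\deg_H(S)=|N_H(S)|$; for a vertex $v$, $N_H(v)=N_H(\{v\})$ (so in a $3$-graph $N_H(v)$ is a set of pairs). $\delta_s(H)$ is the minimum of $\deg_H(S)$ over all $s$-subsets $S$ of $V(H)$. An $F$-factor in $H$ is a set of vertex-disjoint copies of $F$ in $H$ covering $V(H)$. An $(n,p,\mu,\cdot)$ $k$-graph is a $k$-graph $H$ on a vertex set $V$ with $|V|=n$ such that for all $X_1,\dots,X_k\subseteq V$, the number of $k$-tuples $(x_1,\dots,x_k)\in X_1\times\cdots\times X_k$ with $\{x_1,\dots,x_k\}\in E(H)$ is at least $p|X_1|\cdots|X_k|-\mu n^k$. *)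

From HB Require Import structures.
From mathcomp Require Import all_boot all_order all_algebra.
From mathcomp Require Import reals.
Set Implicit Arguments. Unset Strict Implicit. Unset Printing Implicit Defensive.
Import Order.TTheory GRing.Theory Num.Theory.
Local Open Scope ring_scope.

Definition uniform (V : finType) (k : nat) (E : {set {set V}}) : Prop :=
  forall e, e \in E -> #|e| = k :> nat.

Definition nbhd (V : finType) (k : nat) (E : {set {set V}}) (S : {set V})
  : {set {set V}} :=
  [set S' : {set V} | (#|S'| == k - #|S|)%N && ((S :|: S') \in E)].

Definition deg (V : finType) (k : nat) (E : {set {set V}}) (S : {set V}) : nat :=
  #|nbhd k E S|.

Definition min_deg_ge (R : realType) (V : finType) (k s : nat)
  (E : {set {set V}}) (x : R) : Prop :=
  forall S : {set V}, #|S| = s :> nat -> x <= (deg k E S)%:R.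

Definition edge_triples (V : finType) (E : {set {set V}}) (X1 X2 X3 : {set V})
  : nat :=
  #|[set t : V * V * V | [&& t.1.1 \in X1, t.1.2 \in X2, t.2 \in X3 &
                             [set t.1.1; t.1.2; t.2] \in E]]|.

Definition npmu3 (R : realType) (V : finType) (n : nat) (p mu : R)
  (E : {set {set V}}) : Prop :=
  #|V| = n :> nat /\
  forall X1 X2 X3 : {set V},
    p * (#|X1|%:R * #|X2|%:R * #|X3|%:R) - mu * (n%:R ^+ 3)
      <= (edge_triples E X1 X2 X3)%:R.

Definition is_copy (VF V : finType) (EF : {set {set VF}}) (E : {set {set V}})
  (f : {ffun VF -> V}) : Prop :=
  injective f /\ forall e, e \in EF -> f @: e \in E.

Definition has_factor (VF V : finType) (EF : {set {set VF}}) (E : {set {set V}})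
  : Prop :=
  exists C : {set {ffun VF -> V}},
    (forall f, f \in C -> is_copy EF E f) /\
    (forall f g, f \in C -> g \in C -> f != g ->
       [disjoint codom f & codom g]) /\
    (forall v : V, exists2 f, f \in C & v \in codom f).

From HB Require Import structures.
From mathcomp Require Import all_boot all_order all_algebra.
From mathcomp Require Import reals zify lra.
Import Order.TTheory GRing.Theory Num.Theory.
Set Implicit Arguments. Unset Strict Implicit. Unset Printing Implicit Defensive.

(* Take a set S of about n/K vertices and a hub x in S, and let H consist of the
   triples through x lying inside S together with the triples avoiding x that
   meet S in at most one vertex.  If a copy f of F covered x = f w, pick u and a
   pair T in the links of both w and u: the edge w T contains x, so f(T) lies in
   S, while the edge u T avoids x and yet meets S in the two vertices of f(T).  Every vertex still has about (n/K)^2 / 2 link pairs,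
   and a triple can only be a non-edge if it meets S or repeats a vertex, which
   happens for at most (3|S| + 3) n^2 <= (6/K) n^3 triples; so H is
   (n, p, mu, .) as soon as K >= 6 / mu. *)

Lemma card_setU3_le (T : finType) (A B C : {set T}) :
  #|A :|: B :|: C| <= #|A| + #|B| + #|C|.
Proof.
apply: leq_trans (leq_card_setU _ _).1 _.
by rewrite leq_add2r (leq_card_setU _ _).1.
Qed.

Lemma exists_set_card (T : finType) k : k <= #|T| -> exists A : {set T}, #|A| = k.
Proof.
move=> kT; exists [set y in take k (enum T)].
rewrite cardsE (card_uniqP _) ?take_uniq ?enum_uniq // size_take -cardE.
by rewrite ltn_neqAle kT andbT; case: eqP.
Qed.

Lemma bin2_double c : 2 * 'C(c, 2) = c * c.-1.
Proof. by rewrite -mul_bin_diag bin1. Qed.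

Lemma deg1_ge_bin2 (V : finType) (E : {set {set V}}) (v : V) (D : {set V}) :
  (forall T : {set V}, T \subset D -> #|T| = 2 -> v |: T \in E) ->
  'C(#|D|, 2) <= deg 3 E [set v].
Proof.
move=> DE; rewrite -cards_draws; apply/subset_leq_card/subsetP => T.
rewrite !inE cards1 subn1 => /andP[TD /eqP T2].
by rewrite T2 DE.
Qed.

Section Triples.

Variable V : finType.

Definition triple_edge (E : {set {set V}}) (t : V * V * V) : bool :=
  [set t.1.1; t.1.2; t.2] \in E.

Definition touching_triples (S : {set V}) : {set V * V * V} :=
  setX (setX S setT) setT :|: setX (setX setT S) setT :|: setX (setX setT setT) S.

Definition degenerate_triples : {set V * V * V} :=
  [set (p.1, p.1, p.2) | p : V * V] :|: [set (p.1, p.2, p.1) | p : V * V]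
  :|: [set (p.1, p.2, p.2) | p : V * V].

Lemma card_touching_triples (S : {set V}) :
  #|touching_triples S| <= 3 * #|S| * (#|V| * #|V|).
Proof.
apply: leq_trans (card_setU3_le _ _ _) _.
by rewrite !cardsX !cardsT; nia.
Qed.

Lemma card_degenerate_triples : #|degenerate_triples| <= 3 * (#|V| * #|V|).
Proof.
apply: leq_trans (card_setU3_le _ _ _) _.
have diag f : #|[set f p | p : V * V]| <= #|V| * #|V|.
  by rewrite -card_prod; apply: leq_trans (leq_imset_card _ _) (max_card _).
by rewrite !mulSn mul0n addn0 addnA !leq_add ?diag.
Qed.

Lemma card_prod_le_edge_triples (E : {set {set V}}) (X1 X2 X3 : {set V}) :
  #|X1| * #|X2| * #|X3| <=
  edge_triples E X1 X2 X3 + #|[set t | ~~ triple_edge E t]|.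
Proof.
rewrite -!cardsX /edge_triples.
apply: leq_trans (leq_card_setU _ _).1; apply/subset_leq_card/subsetP.
move=> [[a b] c]; rewrite !inE /triple_edge /= => /andP[/andP[-> ->] ->] /=.
exact: orbN.
Qed.

End Triples.

Definition links_overlap (VF : finType) (EF : {set {set VF}}) : Prop :=
  forall v : VF, exists u : VF, u != v /\
    (nbhd 3 EF [set v] :&: nbhd 3 EF [set u] != set0).

Section HubGraph.

Variables (V : finType) (S : {set V}) (x : V).

Definition hub_edges : {set {set V}} :=
  [set e : {set V} | (#|e| == 3) &&
     (if x \in e then e \subset S else #|e :&: S| <= 1)].

Lemma hub_edges_uniform : uniform 3 hub_edges.
Proof. by move=> e; rewrite inE => /andP[/eqP]. Qed.

Lemma hub_notin_copy (VF : finType) (EF : {set {set VF}}) (f : {ffun VF -> V}) :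
  uniform 3 EF -> links_overlap EF -> is_copy EF hub_edges f -> x \notin codom f.
Proof.
move=> unF hF [finj fE]; apply/negP => /codomP[w xw].
have [u [uw /set0Pn[T]]] := hF w.
rewrite !inE cards1 subn1 => /andP[/andP[/eqP /= T2 wTF] /andP[_ uTF]].
have wT : w \notin T.
  apply/negP => wT; have := unF _ wTF.
  by rewrite (setUidPr _) ?sub1set // T2.
have fTS : f @: T \subset S.
  have := fE _ wTF; rewrite inE xw imsetU1 in_setU1 eqxx /= => /andP[_].
  exact/subset_trans/subsetU1.
have xuT : x \notin f @: ([set u] :|: T).
  rewrite xw; apply/imsetP => -[y]; rewrite in_setU1 => /orP[/eqP-> | yT] /finj wy.
    by rewrite wy eqxx in uw.
  by rewrite wy yT in wT.
have := fE _ uTF; rewrite inE (negbTE xuT) => /andP[_].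
apply/negP; rewrite -ltnNge -{1}T2 -(card_imset _ finj).
by apply/subset_leq_card; rewrite subsetI fTS imsetS ?subsetUr.
Qed.

Lemma hub_edges_no_factor (VF : finType) (EF : {set {set VF}}) :
  uniform 3 EF -> links_overlap EF -> ~ has_factor EF hub_edges.
Proof.
move=> unF hF [C [Ccopy [_ Ccov]]]; have [f fC xf] := Ccov x.
by move: xf; apply/negP/hub_notin_copy/Ccopy.
Qed.

Lemma hub_edges_U1 (v : V) (T : {set V}) : v \notin T -> #|T| = 2 ->
  (v |: T \in hub_edges) =
  if x \in v |: T then v |: T \subset S else #|(v |: T) :&: S| <= 1.
Proof. by move=> vT T2; rewrite inE cardsU1 vT T2. Qed.

Hypothesis xS : x \in S.

Lemma hub_edges_U1_outside (v : V) (T : {set V}) :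
  x != v -> v \notin T -> T \subset ~: S -> #|T| = 2 -> v |: T \in hub_edges.
Proof.
move=> xv vT TS T2; rewrite hub_edges_U1 //.
have xT : x \notin T by apply: contraL xS => /(subsetP TS); rewrite inE.
rewrite in_setU1 (negbTE xv) (negbTE xT) -(cards1 v).
apply/subset_leq_card/subsetP => y; rewrite !inE => /andP[/orP[//|yT] yS].
by have := subsetP TS y yT; rewrite inE yS.
Qed.

Lemma hub_edges_deg1_ge (v : V) :
  'C(minn #|S|.-1 #|~: S|.-1, 2) <= deg 3 hub_edges [set v].
Proof.
have [<-|xv] := eqVneq x v.
  apply: leq_trans (deg1_ge_bin2 (D := S :\ x) _).
    by apply: leq_bin2l; rewrite (cardsD1 x S) xS geq_minl.
  move=> T TD T2; have xT : x \notin T by apply/negP => /(subsetP TD); rewrite !inE eqxx.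
  rewrite hub_edges_U1 // setU11 subUset sub1set xS.
  exact: subset_trans TD (subsetDl _ _).
have [vS|vS] := boolP (v \in S).
  apply: leq_trans (deg1_ge_bin2 (D := ~: S) _).
    exact/leq_bin2l/(leq_trans (geq_minr _ _) (leq_pred _)).
  move=> T TS T2; apply: hub_edges_U1_outside => //.
  by apply/negP => /(subsetP TS); rewrite inE vS.
apply: leq_trans (deg1_ge_bin2 (D := ~: S :\ v) _).
  by apply: leq_bin2l; rewrite (cardsD1 v (~: S)) inE vS geq_minr.
move=> T TD T2; apply: hub_edges_U1_outside => //.
- by apply/negP => /(subsetP TD); rewrite !inE eqxx.
- exact: subset_trans TD (subsetDl _ _).
Qed.

Lemma hub_nonedge_triples :
  [set t | ~~ triple_edge hub_edges t] \subset
  touching_triples S :|: degenerate_triples V.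
Proof.
apply/subsetP => -[[a b] c]; rewrite inE; apply: contraR.
rewrite !inE /= !andbT !negb_or => /and3P[/andP[/andP[aS bS] cS] /andP[d1 d2] d3].
have ab : a != b by apply: contraNneq d1 => ->; apply/imsetP; exists (b, c).
have ac : a != c by apply: contraNneq d2 => ->; apply/imsetP; exists (c, b).
have bc : b != c by apply: contraNneq d3 => ->; apply/imsetP; exists (a, c).
rewrite /triple_edge /= -setUA; apply: hub_edges_U1_outside => //.
- by apply: contraNneq aS => <-.
- by rewrite !inE negb_or ab ac.
- by apply/subsetP => y; rewrite !inE => /orP[] /eqP->.
- by rewrite cards2 bc.
Qed.

Lemma hub_edge_triples_ge (X1 X2 X3 : {set V}) :
  #|X1| * #|X2| * #|X3| <=
  edge_triples hub_edges X1 X2 X3 + (3 * #|S| + 3) * (#|V| * #|V|).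
Proof.
apply: leq_trans (card_prod_le_edge_triples hub_edges X1 X2 X3) _.
rewrite leq_add2l.
apply: leq_trans (subset_leq_card hub_nonedge_triples) _.
apply: leq_trans (leq_card_setU _ _).1 _.
by rewrite mulnDl leq_add ?card_touching_triples ?card_degenerate_triples.
Qed.

Lemma hub_edges_min_deg (R : realType) (a : R) :
  (a <= 'C(minn #|S|.-1 #|~: S|.-1, 2)%:R)%R -> min_deg_ge 3 1 hub_edges a.
Proof.
move=> aC S1 /eqP/cards1P[v ->].
by apply: le_trans aC _; rewrite ler_nat hub_edges_deg1_ge.
Qed.
End HubGraph.

Lemma hub_size_bounds K n m : 4 <= K -> 4 * K <= n -> m * K <= n -> n < m.+1 * K ->
  [/\ m.+1 <= n, (3 * m.+1 + 3) * (n * n) * K <= 6 * n ^ 3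
    & n ^ 2 <= 8 * K * K * 'C(minn m (n - m.+1).-1, 2)].
Proof.
move=> K4 nK mK nm; have m4 : 4 <= m by nia.
split; [nia | nia |].
have mn : 4 * m <= n by nia.
have mc : m <= minn m (n - m.+1).-1 by rewrite leq_min leqnn /=; lia.
have n2 : n ^ 2 <= (m.+1 * K) ^ 2 by rewrite leq_exp2r // ltnW.
have m2 : m.+1 ^ 2 <= 4 * (2 * 'C(m, 2)).
  by rewrite bin2_double; case: (m) m4 => // k k4 /=; nia.
apply: (leq_trans n2); rewrite expnMn.
apply: leq_trans (leq_mul m2 (leqnn (K ^ 2))) _.
have := leq_bin2l 2 mc; nia.
Qed.

Local Open Scope ring_scope.

Lemma exists_nat_ge_scaled (R : archiFieldType) (c mu : R) (k : nat) :
  0 <= c -> 0 < mu -> exists2 K : nat, (k <= K)%N & c <= mu * K%:R.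
Proof.
move=> c0 mu0; exists (Num.bound (c / mu) + k)%N; first exact: leq_addl.
rewrite -ler_pdivrMl // mulrC; apply: le_trans (ltW (archi_boundP _)) _.
  by rewrite divr_ge0 // ltW.
by rewrite ler_nat leq_addr.
Qed.

Lemma ler_nat_mul_of_scaled (R : numFieldType) (mu : R) (a b c K : nat) :
  (0 < K)%N -> c%:R <= mu * K%:R -> (a * K <= c * b)%N -> a%:R <= mu * b%:R.
Proof.
move=> K0 cK; rewrite -(ler_nat R) !natrM => abc.
have K0R : 0 < K%:R :> R by rewrite ltr0n.
rewrite -(ler_pM2r K0R) (le_trans abc) //.
by rewrite mulrAC ler_wpM2r.
Qed.

Lemma hub_edges_npmu3 (R : realType) (n : nat) (S : {set 'I_n}) (x : 'I_n) (p mu : R) :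
  x \in S -> 0 <= p <= 1 ->
  ((3 * #|S| + 3) * (n * n))%:R <= mu * n%:R ^+ 3 -> npmu3 n p mu (hub_edges S x).
Proof.
move=> xS /andP[p0 p1] bad_small; split=> [|X1 X2 X3]; first by rewrite card_ord.
have := hub_edge_triples_ge xS X1 X2 X3; rewrite card_ord -(ler_nat R) natrD !natrM.
set P := _ * _ * _; have pP : p * P <= P by rewrite ler_piMl // !mulr_ge0.
lra.
Qed.

Theorem mainTheorem1 (R : realType) (VF : finType) (EF : {set {set VF}}) :
  uniform 3 EF ->
  (forall v : VF, exists u : VF, u != v /\
     (nbhd 3 EF [set v] :&: nbhd 3 EF [set u] != set0)) ->
  forall p mu : R, 0 < p -> p < 1 -> 0 < mu ->
  exists (n0 : nat) (alpha : R), 0 < alpha /\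
    forall n : nat, (n0 <= n)%N ->
      exists E : {set {set 'I_n}},
        [/\ uniform 3 E, npmu3 n p mu E,
            min_deg_ge 3 1 E (alpha * n%:R ^+ 2) & ~ has_factor EF E].
Proof.
move=> unF hF p mu p0 p1 mu0.
have [K K4 muK] := @exists_nat_ge_scaled R 6 mu 4 (ler0n _ 6) mu0.
have K0 : (0 < K)%N by apply: leq_trans K4.
exists (4 * K)%N, (8 * K * K)%:R^-1; split; first by rewrite invr_gt0 ltr0n !muln_gt0 K0.
move=> n nK; set m := (n %/ K)%N.
have [mn dens degr] := hub_size_bounds K4 nK (leq_divM n K) (ltn_ceil n K0).
have [S cardS] : exists S : {set 'I_n}, #|S| = m.+1.
  by apply: exists_set_card; rewrite card_ord.
have [x xS] : exists x, x \in S by apply/card_gt0P; rewrite cardS.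
have cardSC : #|~: S| = (n - m.+1)%N by rewrite cardsCs setCK card_ord cardS.
exists (hub_edges S x); split.
- exact: hub_edges_uniform.
- apply: hub_edges_npmu3 => //; first by rewrite !ltW.
  by rewrite cardS -natrX; apply: ler_nat_mul_of_scaled K0 muK _.
- apply: hub_edges_min_deg => //; rewrite cardS cardSC /=.
  by rewrite ler_pdivrMl ?ltr0n ?muln_gt0 ?K0 // -natrX -natrM ler_nat.
- exact: hub_edges_no_factor.
Qed.
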